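(* Let $n\ge 2$, $N=2^n$, let $a_1,\dots,a_{N-1}$ be scalars, and for $1\le k\le N-1$ define \[ M_k = a_k \sum_{i=0}^{N-1-k} \big(\ket{i}\bra{i+k} + \ket{i+k}\bra{i}\big). \] Fix an integer $j$ with $1\le j<n$ and let $C_j=\{k : 1\le k<2^n,\ k\equiv 2^{j-1} \pmod{2^j}\}$. If $a_k=a_{2^{j-1}}$ for all $k\in C_j$, then \[ \sum_{k\in C_j} M_k = a_{2^{j-1}} \sum_{k\in C_j} X^{b_n(k)}\otimes X^{b_{n-1}(k)}\otimes\cdots\otimes X^{b_1(k)}, \] where $k=\sum_{i=1}^n b_i(k)2^{i-1}$ with $b_i(k)\in\{0,1\}$ is the $n$-bit binary representation of $k$, $X$ is the Pauli $X$ matrix, and $X^0=I$.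
   Context: Computational basis states $\ket{i}$, $i\in\{0,\dots,N-1\}$, of $n$ qubits are identified with $\ket{i_n i_{n-1}\cdots i_1}$ where $i=\sum_{l=1}^n i_l 2^{l-1}$, the leftmost tensor factor corresponding to the most significant bit. The matrices $M_k$ are the diagonal components of the $N\times N$ symmetric Toeplitz matrix with entries $a_{|i-j|}$. *)

From mathcomp Require Import all_boot all_order all_algebra.
From mathcomp.real_closed Require Import mxtens.
Set Implicit Arguments. Unset Strict Implicit. Unset Printing Implicit Defensive.
Import GRing.Theory Num.Theory.
Local Open Scope ring_scope.

(* Computational basis ket |i> of C^N (N = size), i : nat; it is the zero
   vector if i >= N (never used in that case below). *)
Definition ket (R : pzRingType) (N i : nat) : 'cV[R]_N := \col_(r < N) (r == i :> nat)%:R.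

Definition ketbra (R : pzRingType) (N i j : nat) : 'M[R]_N := ket R N i *m (ket R N j)^T.

Definition Mk (R : pzRingType) (N : nat) (a : nat -> R) (k : nat) : 'M[R]_N :=
  a k *: \sum_(0 <= i < N - k) (ketbra R N i (i + k) + ketbra R N (i + k) i).

Definition pauliX (R : pzRingType) : 'M[R]_2 := \matrix_(i < 2, j < 2) (i != j)%:R.

(* F (n-1) ⊗ F (n-2) ⊗ ... ⊗ F 0 as a 2^n x 2^n matrix (Kronecker product,
   leftmost factor = most significant bit); F l acts on bit l+1. *)
Fixpoint kronn (R : pzRingType) (n : nat) (F : nat -> 'M[R]_2) : 'M[R]_(2 ^ n) :=
  match n with
  | 0 => 1%:M
  | m.+1 => castmx (esym (expnS 2 m), esym (expnS 2 m)) (F m *t kronn m F)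
  end.

Definition bit (k i : nat) : bool := odd (k %/ 2 ^ i.-1).

Definition Xstring (R : pzRingType) (n k : nat) : 'M[R]_(2 ^ n) :=
  kronn n (fun l => pauliX R ^+ bit k l.+1).

From mathcomp Require Import all_boot all_order all_algebra.
From mathcomp.real_closed Require Import mxtens.
Set Implicit Arguments. Unset Strict Implicit. Unset Printing Implicit Defensive.
Import GRing.Theory Num.Theory.

(* Write l = j - 1, so that C_j is the set of k whose lowest set bit is l,
   i.e. k %% 2^(l+1) = 2^l.  Entry (r, c) of the left-hand side is
   a_{2^l} times [|r - c| \in C_j].  The Pauli string X^{b(k)} has exactly one
   1 in row r, in column c with k = r xor c, so entry (r, c) of the right-hand
   side is a_{2^l} times [r xor c \in C_j].  Both r - c (for r >= c) and
   r xor c have lowest set bit l exactly when r and c agree on their l low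
   bits and differ at bit l. *)

Definition bitn (x i : nat) : bool := odd (x %/ 2 ^ i).

Lemma modn_pow2S x l : x %% 2 ^ l.+1 = x %% 2 ^ l + 2 ^ l * bitn x l.
Proof.
rewrite {1}(divn_eq (x %% 2 ^ l.+1) (2 ^ l)) expnS -modn_divl modn2.
by rewrite modn_dvdm ?dvdn_mull // addnC mulnC.
Qed.

Lemma eqn_modn_pow2S x y l :
  (x %% 2 ^ l.+1 == y %% 2 ^ l.+1) = (x %% 2 ^ l == y %% 2 ^ l) && (bitn x l == bitn y l).
Proof.
rewrite !modn_pow2S; apply/eqP/andP => [|[/eqP-> /eqP->] //].
rewrite ![_ %% _ + _]addnC ![2 ^ l * _]mulnC => /(congr1 (edivn^~ (2 ^ l))).
rewrite !edivn_eq ?ltn_pmod ?expn_gt0 // => -[E ->]; split=> //.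
by move: E; case: bitn; case: bitn.
Qed.

Lemma lowbit_bitn x l : (x %% 2 ^ l.+1 == 2 ^ l) = (x %% 2 ^ l == 0) && bitn x l.
Proof.
rewrite -{1}(@modn_small (2 ^ l) (2 ^ l.+1)) ?ltn_exp2l // eqn_modn_pow2S.
by rewrite modnn /bitn divnn expn_gt0 eqb_id.
Qed.

Lemma lowbit_gt0 x l : x %% 2 ^ l.+1 == 2 ^ l -> 0 < x.
Proof. by case: x => //; rewrite mod0n eq_sym expn_eq0. Qed.

Lemma bitn_modn x n i : i < n -> bitn (x %% 2 ^ n) i = bitn x i.
Proof.
move=> /subnKC <-; move: (n - i.+1) => m; rewrite addSnnS.
rewrite /bitn {2}(divn_eq x (2 ^ (i + m.+1))) expnD mulnA mulnAC divnDl ?dvdn_mull //.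
by rewrite mulnK ?expn_gt0 // oddD oddM oddX /= andbF.
Qed.

Lemma bitn_addMpow2 a l (z : bool) : a < 2 ^ l -> bitn (a + 2 ^ l * z) l = z.
Proof.
by move=> lt_a; rewrite /bitn addnC mulnC divnMDl ?expn_gt0 // divn_small // addn0; case: z.
Qed.

Lemma divn_pow2_bitn x n : x < 2 ^ n.+1 -> x %/ 2 ^ n = bitn x n.
Proof.
rewrite expnS -ltn_divLR ?expn_gt0 // /bitn.
by case: (x %/ 2 ^ n) => [|[|m]].
Qed.

Lemma lowbit_addn r d l :
  (r %% 2 ^ l == (r + d) %% 2 ^ l) && (bitn r l != bitn (r + d) l)
  = (d %% 2 ^ l.+1 == 2 ^ l).
Proof.
rewrite lowbit_bitn -[X in X == _ %[mod _]]addn0 eq_sym eqn_modDl mod0n -/(2 ^ l %| d).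
case: (boolP (2 ^ l %| d)) => //= dvd_d.
by rewrite /bitn divnDr // oddD; case: odd; case: odd.
Qed.

Fixpoint xorn (n r c : nat) : nat :=
  if n is m.+1 then xorn m r c + 2 ^ m * (bitn r m != bitn c m) else 0.

Lemma xornC n r c : xorn n r c = xorn n c r.
Proof. by elim: n => //= n ->; rewrite eq_sym. Qed.

Lemma xorn_lt n r c : xorn n r c < 2 ^ n.
Proof.
elim: n => //= n IH; rewrite expnS mul2n -addnn.
by case: (_ != _); rewrite ?muln1 ?ltn_add2r // muln0 addn0 ltn_addr.
Qed.

Lemma modn_xorn n l r c : l <= n -> xorn n r c %% 2 ^ l = xorn l r c.
Proof.
elim: n => [|n IH]; first by rewrite leqn0 => /eqP ->.
rewrite leq_eqVlt => /orP [/eqP -> | lt_ln]; first by rewrite modn_small // xorn_lt.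
rewrite /= -modnDmr (eqP (_ : 2 ^ l %| 2 ^ n * _)) ?addn0 ?IH //.
by rewrite dvdn_mulr // dvdn_exp2l.
Qed.

Lemma bitn_xorn n r c i : i < n -> bitn (xorn n r c) i = (bitn r i != bitn c i).
Proof.
by move=> lt_in; rewrite -(bitn_modn _ (ltnSn i)) modn_xorn //= bitn_addMpow2 // xorn_lt.
Qed.

Lemma xorn_modn n r c : xorn n (r %% 2 ^ n) (c %% 2 ^ n) = xorn n r c.
Proof.
suff xornE m : m <= n -> xorn m (r %% 2 ^ n) (c %% 2 ^ n) = xorn m r c by exact: xornE.
by elim: m => //= m IH lt_mn; rewrite !bitn_modn // IH // ltnW.
Qed.

Lemma xorn_eq0 l r c : (xorn l r c == 0) = (r %% 2 ^ l == c %% 2 ^ l).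
Proof.
elim: l => [|l IH]; first by rewrite !modn1.
rewrite /= addn_eq0 muln_eq0 expn_eq0 /= eqn_modn_pow2S IH.
by case: (_ == _ %[mod _]) => /=; case: (bitn r l); case: (bitn c l).
Qed.

Lemma lowbit_xorn n l r c : l < n ->
  (xorn n r c %% 2 ^ l.+1 == 2 ^ l) = (r %% 2 ^ l == c %% 2 ^ l) && (bitn r l != bitn c l).
Proof.
by move=> lt_ln; rewrite lowbit_bitn modn_xorn 1?ltnW // xorn_eq0 bitn_xorn.
Qed.

Lemma sum_pred1_uniq (I : eqType) (s : seq I) (P : pred I) d :
  uniq s -> \sum_(k <- s | P k) (k == d) = (d \in s) && P d.
Proof.
move=> s_uniq; rewrite -big_filter.
transitivity (count_mem d (filter P s)).
  by rewrite -sum1_count [RHS]big_mkcond; apply: eq_bigr => k _; rewrite /pred1 /=; case: eqP.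
by rewrite (count_uniq_mem _ (filter_uniq P s_uniq)) mem_filter andbC.
Qed.

Lemma sum_lowbit_pred1 n l x : x < 2 ^ n ->
  \sum_(1 <= k < 2 ^ n | k %% 2 ^ l.+1 == 2 ^ l) (k == x) = (x %% 2 ^ l.+1 == 2 ^ l).
Proof.
move=> x_lt; rewrite sum_pred1_uniq ?iota_uniq // mem_index_iota x_lt andbT.
by rewrite andb_idl //; apply: lowbit_gt0.
Qed.

Lemma sum_lowbit_adjacent n l r d : r + d < 2 ^ n ->
  \sum_(1 <= k < 2 ^ n | k %% 2 ^ l.+1 == 2 ^ l) ((r + d == r + k) + (r == r + d + k))
  = (d %% 2 ^ l.+1 == 2 ^ l).
Proof.
move=> rd_lt; rewrite -(sum_lowbit_pred1 _ (leq_ltn_trans (leq_addl r d) rd_lt)).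
apply: eq_bigr => k /lowbit_gt0 k_gt0.
rewrite eqn_add2l eq_sym (_ : r == _ = false) ?addn0 //.
by rewrite -addnA -{1}[r]addn0 eqn_add2l eq_sym addn_eq0 (gtn_eqF k_gt0) andbF.
Qed.

Lemma sum_lowbit_adjacent_xorn n l r c : l < n -> r < 2 ^ n -> c < 2 ^ n ->
  \sum_(1 <= k < 2 ^ n | k %% 2 ^ l.+1 == 2 ^ l) ((c == r + k) + (r == c + k))
  = \sum_(1 <= k < 2 ^ n | k %% 2 ^ l.+1 == 2 ^ l) (k == xorn n r c).
Proof.
move=> lt_ln; wlog le_rc : r c / r <= c => [hwlog r_lt c_lt|].
  case/orP: (leq_total r c) => [le_rc|le_cr]; first exact: hwlog.
  by rewrite xornC -hwlog //; apply: eq_bigr => k _; rewrite addnC.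
rewrite -(subnKC le_rc); move: (c - r) => d r_lt rd_lt.
by rewrite sum_lowbit_adjacent // sum_lowbit_pred1 ?xorn_lt // lowbit_xorn // lowbit_addn.
Qed.

Lemma sum_shift_pair N k r c : c < N ->
  \sum_(0 <= i < N - k) ((r == i) && (c == i + k)) = (c == r + k).
Proof.
move=> c_lt; have [c_eq | c_neq] := eqVneq c (r + k); last first.
  by rewrite big1 // => i _; case: eqVneq => [<-|] //=; rewrite (negbTE c_neq).
transitivity (\sum_(0 <= i < N - k) (i == r)).
  by apply: eq_bigr => i _; rewrite c_eq eq_sym; case: eqVneq => [->|]; rewrite ?eqxx.
by rewrite sum_pred1_uniq ?iota_uniq // mem_index_iota ltn_subRL addnC -c_eq c_lt.
Qed.

Local Open Scope ring_scope.

Lemma ketbra_entry (R : pzRingType) N i j (r c : 'I_N) :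
  ketbra R N i j r c = ((r == i :> nat) && (c == j :> nat))%:R.
Proof. by rewrite /ketbra /ket !mxE big_ord1 !mxE -natrM mulnb. Qed.

Lemma Mk_entry (R : pzRingType) N (a : nat -> R) k (r c : 'I_N) :
  Mk N a k r c = a k * ((c == r + k :> nat) + (r == c + k :> nat))%N%:R.
Proof.
rewrite /Mk !mxE summxE; congr (_ * _).
under eq_bigr do rewrite mxE !ketbra_entry -natrD.
rewrite -natr_sum big_split /= sum_shift_pair //.
by under eq_bigr do rewrite andbC; rewrite sum_shift_pair.
Qed.

Lemma pauliX_expE (R : pzRingType) (z : bool) (x y : 'I_2) :
  (pauliX R ^+ z) x y = ((x != y) == z)%:R.
Proof. by case: z; rewrite ?expr1 ?expr0 mxE //; case: eqP. Qed.

Lemma XstringS (R : pzRingType) n k :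
  Xstring R n.+1 k
  = castmx (esym (expnS 2 n), esym (expnS 2 n)) (pauliX R ^+ bitn k n *t Xstring R n k).
Proof. by []. Qed.

Lemma Xstring_entry (R : pzRingType) n k (r c : 'I_(2 ^ n)) :
  Xstring R n k r c = (k %% 2 ^ n == xorn n r c)%N%:R.
Proof.
elim: n r c => [|n IH] r c.
  rewrite mxE modn1 (_ : r = c) ?eqxx //.
  by apply/val_inj; case: r c => [[|?] //] ? [[|?] //] ?.
rewrite XstringS castmxE !mxE IH pauliX_expE -natrM mulnb xorn_modn.
rewrite -[xorn n.+1 r c](modn_small (xorn_lt n.+1 r c)) eqn_modn_pow2S.
rewrite modn_xorn // bitn_xorn // andbC -val_eqE /= !divn_pow2_bitn //.
by rewrite (eq_sym (bitn k n)); case: (bitn r n); case: (bitn c n).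
Qed.

Lemma sum_lowbit_Mk_Xstring (R : pzRingType) n l : (l < n)%N ->
  \sum_(1 <= k < 2 ^ n | (k %% 2 ^ l.+1 == 2 ^ l)%N) Mk (2 ^ n) (fun=> 1 : R) k
  = \sum_(1 <= k < 2 ^ n | (k %% 2 ^ l.+1 == 2 ^ l)%N) Xstring R n k.
Proof.
move=> lt_ln; apply/matrixP => r c; rewrite !summxE.
under eq_bigr do rewrite Mk_entry mul1r.
rewrite [RHS]big_nat_cond.
under [RHS]eq_bigr => k /andP[/andP[_ k_lt] _] do rewrite Xstring_entry modn_small //.
by rewrite -big_nat_cond -!natr_sum sum_lowbit_adjacent_xorn.
Qed.

Theorem theorem2 (R : numClosedFieldType) (n : nat) (a : nat -> R) (j : nat) :
  (2 <= n)%N -> (1 <= j < n)%N ->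
  (forall k : nat, (1 <= k < 2 ^ n)%N -> (k %% 2 ^ j = 2 ^ j.-1)%N ->
     a k = a (2 ^ j.-1)%N) ->
  \sum_(1 <= k < 2 ^ n | (k %% 2 ^ j == 2 ^ j.-1)%N) Mk (2 ^ n) a k
  = a (2 ^ j.-1)%N *: \sum_(1 <= k < 2 ^ n | (k %% 2 ^ j == 2 ^ j.-1)%N) Xstring R n k.
Proof.
move=> _ /andP[j_gt0 j_lt_n] a_const.
case: j j_gt0 j_lt_n a_const => [//|l] _ lt_ln a_const /=.
rewrite -sum_lowbit_Mk_Xstring 1?ltnW // scaler_sumr big_nat_cond [RHS]big_nat_cond.
apply: eq_bigr => k /andP[k_range /eqP lowbit_k].
by rewrite /Mk scale1r a_const.
Qed.
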